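(* Let $Q$ be a Dynkin quiver equipped with a group $G$ of automorphisms, and let $\gamma,\beta\in\Phi(Q)$ be roots such that $\pi(\gamma)=\pi(\beta)$. Then there exists $g\in G$ such that $\gamma=g\cdot\beta$.
   Context: A Dynkin quiver is a finite quiver whose underlying graph is a Dynkin diagram of type $\mathbb A_n,\mathbb D_n,\mathbb E_6,\mathbb E_7,\mathbb E_8$, with vertex set $Q_0$. $\Phi(Q)\subset\mathbb Z^{Q_0}$ is its root system, roots written in the basis of simple roots $\alpha_i$, $i\in Q_0$. An automorphism of $Q$ is a permutation $g$ of $Q_0$ preserving $b_{ij}$ = #arrows $i\to j$ $-$ #arrows $j\to i$. $G$ acts on $\mathbb Z^{Q_0}$ by $g\cdot(d_i)_{i}=(d_{g^{-1}i})_i$. With $\overline Q_0$ the set of $G$-orbits, $\pi:\mathbb Z^{Q_0}\to\mathbb Z^{\overline Q_0}$ is $(d_i)_i\mapsto(\sum_{j\in\mathbf i}d_j)_{\mathbf i\in\overline Q_0}$. *)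

From mathcomp Require Import all_boot all_order all_algebra all_fingroup.
Set Implicit Arguments. Unset Strict Implicit. Unset Printing Implicit Defensive.
Import GRing.Theory Num.Theory.
Local Open Scope ring_scope.

(* A finite quiver on the vertex set V: arr i j = number of arrows i -> j. *)
Definition quiver (V : finType) := V -> V -> nat.

Definition bmat (V : finType) (Q : quiver V) (i j : V) : int :=
  (Q i j)%:Z - (Q j i)%:Z.

Definition adjA (n : nat) (i j : 'I_n) : bool :=
  (i.+1 == j :> nat) || (j.+1 == i :> nat).
Definition adjD (n : nat) (i j : 'I_n) : bool :=
  let pathv k := (k <= n - 2)%N in
  [|| [&& pathv i, pathv j & (i.+1 == j :> nat) || (j.+1 == i :> nat)],
      (i == n.-1 :> nat) && (j == (n - 3)%N :> nat) |
      (j == n.-1 :> nat) && (i == (n - 3)%N :> nat)].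
Definition adjE (n : nat) (i j : 'I_n) : bool :=
  let pathv k := (k <= n - 2)%N in
  [|| [&& pathv i, pathv j & (i.+1 == j :> nat) || (j.+1 == i :> nat)],
      (i == n.-1 :> nat) && (j == 2%N :> nat) |
      (j == n.-1 :> nat) && (i == 2%N :> nat)].

Definition dynkin_diagram (n : nat) (e : 'I_n -> 'I_n -> bool) : Prop :=
  [/\ (1 <= n)%N & e = @adjA n] \/
  [/\ (4 <= n)%N & e = @adjD n] \/
  [/\ (n \in [:: 6; 7; 8]%N) & e = @adjE n].

Definition dynkin_quiver (V : finType) (Q : quiver V) : Prop :=
  exists n (e : 'I_n -> 'I_n -> bool) (f : V -> 'I_n),
    [/\ dynkin_diagram e, bijective f,
        forall i, Q i i = 0%N &
        forall i j, i != j -> (Q i j + Q j i)%N = nat_of_bool (e (f i) (f j))].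

Definition quiver_aut (V : finType) (Q : quiver V) (g : {perm V}) : Prop :=
  forall i j, bmat Q (g i) (g j) = bmat Q i j.

Definition dimvec (V : finType) := {ffun V -> int}.

Definition simple_root (V : finType) (k : V) : dimvec V :=
  [ffun i => (i == k)%:Z].

(* Symmetric bilinear (Cartan/Euler-symmetrized) form:
   (alpha_i, alpha_j) = 2 delta_ij - #edges between i and j. *)
Definition cartan_form (V : finType) (Q : quiver V) (d e : dimvec V) : int :=
  \sum_i \sum_j ((2 * (i == j))%:Z - (Q i j + Q j i)%:Z) * d i * e j.

Definition sreflect (V : finType) (Q : quiver V) (k : V) (d : dimvec V)
  : dimvec V :=
  [ffun i => d i - cartan_form Q d (simple_root k) * simple_root k i].

(* Root system Phi(Q): the orbit of the simple roots under the Weyl group. *)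
Inductive is_root (V : finType) (Q : quiver V) : dimvec V -> Prop :=
| root_simple k : is_root Q (simple_root k)
| root_reflect k d : is_root Q d -> is_root Q (sreflect Q k d).

Definition vact (V : finType) (g : {perm V}) (d : dimvec V) : dimvec V :=
  [ffun i => d ((g^-1)%g i)].

(* pi(d) evaluated at the G-orbit of i: sum of d_j over j in that orbit. *)
Definition orbit_sum (V : finType) (G : {group {perm V}}) (d : dimvec V)
  (i : V) : int :=
  \sum_(j in orbit 'P G i) d j.

(* The symmetrised form ( , ) of a Dynkin quiver is even and positive definite (type by
   type it is a positively weighted sum of squares), so roots have norm 2 and nonzero
   vectors norm at least 2.  A vector x of norm 2 is sign-coherent: otherwise
   x = x+ - x- with (x+, x-) <= 0 would have norm at least 4.
   Let S d be the sum of the g.d over g in G.  Its i-th coordinate is |G_i| times the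
   component of pi(d) at the orbit of i, so S gamma = S beta, and S x <> 0 whenever x has
   norm 2.  Since G preserves the form and fixes S gamma,
   0 < (S gamma, S gamma) = |G| (gamma, S gamma) = |G| sum_g (gamma, g.beta),
   so (gamma, g.beta) >= 1 for some g in G.  Then delta = gamma - g.beta has norm
   4 - 2 (gamma, g.beta) <= 2 and S delta = 0, which forces delta = 0. *)

From mathcomp Require Import all_boot all_order all_algebra all_fingroup.
From mathcomp Require Import zify ring.
From HB Require Import structures.

Set Implicit Arguments.
Unset Strict Implicit.
Unset Printing Implicit Defensive.

Import Order.TTheory GRing.Theory Num.Theory.
Local Open Scope ring_scope.

Lemma weighted_sqr_sum_gt0 (R : realDomainType) (c x : R) (s : seq (R * R)) :
  0 < c -> all (fun p => 0 < p.1) s -> c * x = \sum_(p <- s) p.1 * p.2 ^+ 2 ->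
  ~~ all (fun p => p.2 == 0) s -> 0 < x.
Proof.
move=> c_gt0 + cx; rewrite -(pmulr_rgt0 _ c_gt0) cx {cx}.
elim: s => //= -[w y] s IH /andP[/= w_gt0 ws]; rewrite negb_and big_cons /=.
have rest_ge0 : 0 <= \sum_(p <- s) p.1 * p.2 ^+ 2.
  rewrite big_seq; apply: sumr_ge0 => p /(allP ws) p_gt0.
  exact: mulr_ge0 (ltW p_gt0) (sqr_ge0 _).
case/orP => [y_nz | /(IH ws) rest_gt0].
  by rewrite ltr_wpDr // mulr_gt0 // exprn_even_gt0 //= y_nz.
exact: ltr_wpDl (mulr_ge0 (ltW w_gt0) (sqr_ge0 _)) rest_gt0.
Qed.

Section GraphForm.

Implicit Types (E : nat -> nat -> bool) (Y : nat -> int).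

Definition cartan_coef E (a b : nat) : int := (2 * (a == b))%:Z - (E a b)%:Z.

Definition graph_form (n : nat) E Y : int :=
  \sum_(0 <= a < n) \sum_(0 <= b < n) cartan_coef E a b * Y a * Y b.

Definition posdef_graph_form (n : nat) E : Prop :=
  forall Y, ~ (forall a, (a < n)%N -> Y a = 0) -> 0 < graph_form n E Y.

Lemma eq_graph_form n E E' Y :
  (forall a b, (a < n)%N -> (b < n)%N -> E a b = E' a b) ->
  graph_form n E Y = graph_form n E' Y.
Proof.
move=> eqE; apply: eq_big_nat => a /andP[_ lt_an].
by apply: eq_big_nat => b /andP[_ lt_bn]; rewrite /cartan_coef eqE.
Qed.

Lemma graph_form_leaf n j E Y : symmetric E -> (j < n)%N ->
  (forall a, (a <= n)%N -> E a n = (a == j)) ->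
  graph_form n.+1 E Y = graph_form n E Y - 2 * Y j * Y n + 2 * Y n ^+ 2.
Proof.
move=> E_sym lt_jn En.
have col : \sum_(0 <= a < n) cartan_coef E a n * Y a * Y n = - Y j * Y n.
  rewrite -mulr_suml (bigD1_seq j) ?mem_index_iota ?iota_uniq //= big1_seq.
    by rewrite /cartan_coef En ?(ltnW lt_jn) // eqxx (ltn_eqF lt_jn); lia.
  move=> a /andP[ne_aj]; rewrite mem_index_iota => /andP[_ lt_an].
  by rewrite /cartan_coef En ?(ltnW lt_an) // (negbTE ne_aj) (ltn_eqF lt_an); lia.
have row : \sum_(0 <= b < n) cartan_coef E n b * Y n * Y b = - Y j * Y n.
  by rewrite -col; apply: eq_bigr => b _; rewrite /cartan_coef E_sym eq_sym; ring.
have diag : cartan_coef E n n = 2.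
  by rewrite /cartan_coef En // eqxx (gtn_eqF lt_jn); lia.
rewrite /graph_form big_nat_recr //= big_nat_recr //=.
under eq_bigr => a _ do rewrite big_nat_recr //=.
by rewrite big_split /= col row diag; ring.
Qed.

(* [adjA n], [adjD n], [adjE n] of the Dynkin diagrams are convertible to these
   relations restricted to ['I_n]. *)
Definition adj_path (a b : nat) : bool := (a.+1 == b) || (b.+1 == a).

Definition adj_D (n a b : nat) : bool :=
  [|| [&& a <= n - 2, b <= n - 2 & adj_path a b],
      (a == n.-1) && (b == n - 3) | (b == n.-1) && (a == n - 3)]%N.

Definition adj_E (n a b : nat) : bool :=
  [|| [&& a <= n - 2, b <= n - 2 & adj_path a b],
      (a == n.-1) && (b == 2) | (b == n.-1) && (a == 2)]%N.

Definition path_sqsum (k : nat) Y : int :=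
  Y 0%N ^+ 2 + \sum_(0 <= a < k) (Y a - Y a.+1) ^+ 2.

Lemma path_sqsum_ge0 k Y : 0 <= path_sqsum k Y.
Proof. by rewrite addr_ge0 ?sqr_ge0 // sumr_ge0 // => a _; apply: sqr_ge0. Qed.

Lemma path_sqsum_eq0 k Y : path_sqsum k Y = 0 -> forall a, (a <= k)%N -> Y a = 0.
Proof.
elim: k => [|k IH].
  by rewrite /path_sqsum big_geq // addr0 => /eqP; rewrite sqrf_eq0 => /eqP Y0 [].
rewrite /path_sqsum big_nat_recr //= addrA => /eqP.
rewrite paddr_eq0 ?sqr_ge0 ?path_sqsum_ge0 // sqrf_eq0 subr_eq0.
move=> /andP[/eqP/IH Y_le_k /eqP Yk] a; rewrite leq_eqVlt ltnS => /predU1P[-> |].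
  by rewrite -Yk Y_le_k.
exact: Y_le_k.
Qed.

Lemma adj_pathC : symmetric adj_path.
Proof. by move=> a b; rewrite /adj_path orbC. Qed.

Lemma graph_form_path k Y : graph_form k.+1 adj_path Y = path_sqsum k Y + Y k ^+ 2.
Proof.
elim: k => [|k IH].
  by rewrite /graph_form /path_sqsum !big_nat1 big_geq // /cartan_coef /=; ring.
rewrite (@graph_form_leaf _ k _ _ adj_pathC) // => [|a a_le].
  by rewrite IH /path_sqsum big_nat_recr //=; ring.
by rewrite /adj_path; lia.
Qed.

Lemma graph_form_D k Y : graph_form k.+4 (adj_D k.+4) Y =
  path_sqsum k.+1 Y + (Y k.+1 - Y k.+2 - Y k.+3) ^+ 2 + (Y k.+2 - Y k.+3) ^+ 2.
Proof.
have adj_DC : symmetric (adj_D k.+4) by move=> a b; rewrite /adj_D /adj_path; lia.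
rewrite (@graph_form_leaf _ k.+1) // => [|a a_le]; last by rewrite /adj_D /adj_path; lia.
rewrite (@graph_form_leaf _ k.+1) // => [|a a_le]; last by rewrite /adj_D /adj_path; lia.
rewrite (@eq_graph_form _ _ adj_path) ?graph_form_path => [|a b a_lt b_lt]; first ring.
by rewrite /adj_D /adj_path; lia.
Qed.

Lemma graph_form_E k Y : (2 <= k)%N -> graph_form k.+2 (adj_E k.+2) Y =
  path_sqsum k Y + Y k ^+ 2 - 2 * Y 2%N * Y k.+1 + 2 * Y k.+1 ^+ 2.
Proof.
move=> k_ge2; have adj_EC : symmetric (adj_E k.+2).
  by move=> a b; rewrite /adj_E /adj_path; lia.
rewrite (@graph_form_leaf _ 2) // => [|a a_le]; last by rewrite /adj_E /adj_path; lia.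
rewrite (@eq_graph_form _ _ adj_path) ?graph_form_path // => a b a_lt b_lt.
by rewrite /adj_E /adj_path; lia.
Qed.

Lemma posdef_path n : posdef_graph_form n adj_path.
Proof.
case: n => [|k] Y nzY; first by case: nzY.
rewrite graph_form_path lt0r addr_ge0 ?path_sqsum_ge0 ?sqr_ge0 // andbT.
rewrite paddr_eq0 ?path_sqsum_ge0 ?sqr_ge0 //; apply: contra_notN nzY.
by move=> /andP[/eqP /path_sqsum_eq0 Y0 _] a; rewrite ltnS; apply: Y0.
Qed.

Lemma posdef_D n : (4 <= n)%N -> posdef_graph_form n (adj_D n).
Proof.
case: n => [|[|[|[|k]]]] // _ Y nzY; rewrite graph_form_D.
have P_ge0 := path_sqsum_ge0 k.+1 Y.
have s1_ge0 := sqr_ge0 (Y k.+1 - Y k.+2 - Y k.+3).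
have s2_ge0 := sqr_ge0 (Y k.+2 - Y k.+3).
rewrite lt0r; apply/andP; split; last by lia.
apply: contra_notN nzY => /eqP sum0 a a_lt.
have /path_sqsum_eq0 Y0 : path_sqsum k.+1 Y = 0 by lia.
have /eqP : (Y k.+2 - Y k.+3) ^+ 2 = 0 by lia.
have /eqP : (Y k.+1 - Y k.+2 - Y k.+3) ^+ 2 = 0 by lia.
rewrite !sqrf_eq0; have := Y0 k.+1 (leqnn _).
case: (leqP a k.+1) => [/Y0 // | a_gt].
have [->|->] : a = k.+2 \/ a = k.+3 by lia.
all: by move=> *; lia.
Qed.

Lemma posdef_E6 : posdef_graph_form 6 (adj_E 6).
Proof.
move=> Y nzY; apply: (@weighted_sqr_sum_gt0 _ 6 _
  [:: (3, 2 * Y 5%N - Y 2%N); (3, 2 * Y 0%N - Y 1%N); (1, 3 * Y 1%N - 2 * Y 2%N);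
      (3, 2 * Y 4%N - Y 3%N); (1, 3 * Y 3%N - 2 * Y 2%N); (1, Y 2%N)]) => //.
  rewrite (@graph_form_E 4) // /path_sqsum !big_nat_recr //= big_geq //.
  by rewrite !big_cons big_nil /=; ring.
rewrite /=; apply/negP => Y_eqs; apply: nzY => a.
by do 6 (case: a => [|a]; first by lia).
Qed.

Lemma posdef_E7 : posdef_graph_form 7 (adj_E 7).
Proof.
move=> Y nzY; apply: (@weighted_sqr_sum_gt0 _ 12 _
  [:: (6, 2 * Y 6%N - Y 2%N); (6, 2 * Y 0%N - Y 1%N); (2, 3 * Y 1%N - 2 * Y 2%N);
      (6, 2 * Y 5%N - Y 4%N); (2, 3 * Y 4%N - 2 * Y 3%N); (1, 4 * Y 3%N - 3 * Y 2%N);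
      (1, Y 2%N)]) => //.
  rewrite (@graph_form_E 5) // /path_sqsum !big_nat_recr //= big_geq //.
  by rewrite !big_cons big_nil /=; ring.
rewrite /=; apply/negP => Y_eqs; apply: nzY => a.
by do 7 (case: a => [|a]; first by lia).
Qed.

Lemma posdef_E8 : posdef_graph_form 8 (adj_E 8).
Proof.
move=> Y nzY; apply: (@weighted_sqr_sum_gt0 _ 60 _
  [:: (30, 2 * Y 7%N - Y 2%N); (30, 2 * Y 0%N - Y 1%N); (10, 3 * Y 1%N - 2 * Y 2%N);
      (30, 2 * Y 6%N - Y 5%N); (10, 3 * Y 5%N - 2 * Y 4%N); (5, 4 * Y 4%N - 3 * Y 3%N);
      (3, 5 * Y 3%N - 4 * Y 2%N); (2, Y 2%N)]) => //.
  rewrite (@graph_form_E 6) // /path_sqsum !big_nat_recr //= big_geq //.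
  by rewrite !big_cons big_nil /=; ring.
rewrite /=; apply/negP => Y_eqs; apply: nzY => a.
by do 8 (case: a => [|a]; first by lia).
Qed.

End GraphForm.

Lemma ffun_neq0 (T : finType) (R : nmodType) (f : {ffun T -> R}) :
  f != 0 -> exists i, f i != 0.
Proof.
move=> f_neq0; apply/existsP; apply: contraNT f_neq0 => /existsPn f0.
by apply/eqP/ffunP => i; rewrite ffunE; apply/eqP/negPn/f0.
Qed.

Section CartanForm.

Variables (V : finType) (Q : quiver V).
Implicit Types (d e x y : dimvec V).
Local Notation B := (cartan_form Q).

Definition cartan_entry (i j : V) : int := (2 * (i == j))%:Z - (Q i j + Q j i)%:Z.

Lemma cartan_formE d e : B d e = \sum_i \sum_j cartan_entry i j * d i * e j.
Proof. by []. Qed.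

Lemma cartan_formC d e : B d e = B e d.
Proof.
rewrite !cartan_formE exchange_big; apply: eq_bigr => i _; apply: eq_bigr => j _.
by rewrite /cartan_entry (eq_sym j) (addnC (Q j i)); ring.
Qed.

Lemma cartan_form_is_zmod_morphism d : zmod_morphism (B d).
Proof.
move=> e1 e2; rewrite !cartan_formE -sumrB; apply: eq_bigr => i _.
by rewrite -sumrB; apply: eq_bigr => j _; rewrite !ffunE; ring.
Qed.

HB.instance Definition _ d :=
  GRing.isZmodMorphism.Build _ _ (B d) (cartan_form_is_zmod_morphism d).

Lemma cartan_formBB d e : B (d - e) (d - e) = B d d - 2 * B d e + B e e.
Proof.
rewrite raddfB /= !(cartan_formC (d - e)) !raddfB /= (cartan_formC e d); ring.
Qed.

Lemma cartan_form_simple k : Q k k = 0%N -> B (simple_root k) (simple_root k) = 2.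
Proof.
move=> Qkk; rewrite cartan_formE (bigD1 k) //= [X in _ + X]big1 => [|i ne_ik]; last first.
  by rewrite big1 // => j _; rewrite !ffunE (negbTE ne_ik) mulr0 mul0r.
rewrite (bigD1 k) //= big1 => [|j ne_jk]; last by rewrite !ffunE (negbTE ne_jk) mulr0.
by rewrite !ffunE eqxx /cartan_entry eqxx Qkk; lia.
Qed.

Lemma sreflectE k d : sreflect Q k d = d - simple_root k *~ B d (simple_root k).
Proof. by apply/ffunP => i; rewrite !ffunE ffunMzE ffunE; ring. Qed.

Lemma cartan_form_sreflect k d :
  Q k k = 0%N -> B (sreflect Q k d) (sreflect Q k d) = B d d.
Proof.
move=> Qkk; rewrite sreflectE cartan_formBB !raddfMz /= (cartan_formC (_ *~ _)) raddfMz /=.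
by rewrite cartan_form_simple //; ring.
Qed.

Lemma root_norm d : (forall i, Q i i = 0%N) -> is_root Q d -> B d d = 2.
Proof.
by move=> Q0; elim=> [k | k e _ IH]; rewrite ?cartan_form_sreflect ?cartan_form_simple.
Qed.

Lemma cartan_form_even x : exists m, B x x = 2 * m.
Proof.
exists (\sum_i x i ^+ 2 - \sum_i \sum_j (Q i j)%:Z * x i * x j).
have diag : \sum_i \sum_j (2 * (i == j))%:Z * x i * x j = 2 * \sum_i x i ^+ 2.
  rewrite mulr_sumr; apply: eq_bigr => i _; rewrite (bigD1 i) //= big1 => [|j].
    by rewrite eqxx muln1 addr0; ring.
  by move=> ne_ji; rewrite eq_sym (negbTE ne_ji) muln0 !mul0r.
have flip : \sum_i \sum_j (Q j i)%:Z * x i * x j = \sum_i \sum_j (Q i j)%:Z * x i * x j.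
  by rewrite exchange_big; apply: eq_bigr => i _; apply: eq_bigr => j _; ring.
rewrite cartan_formE mulrBr -diag mulr_natl mulr2n -{2}flip opprD addrA -!sumrB.
apply: eq_bigr => i _.
by rewrite -!sumrB; apply: eq_bigr => j _; rewrite /cartan_entry PoszD; ring.
Qed.

Lemma cartan_form_disjoint_le0 x y : (forall i, 0 <= x i) -> (forall i, 0 <= y i) ->
  (forall i, x i * y i = 0) -> B x y <= 0.
Proof.
move=> x_ge0 y_ge0 xy0; rewrite cartan_formE; apply: sumr_le0 => i _.
apply: sumr_le0 => j _; case: (eqVneq i j) => [<- | ne_ij].
  by rewrite -mulrA xy0 mulr0.
rewrite /cartan_entry (negbTE ne_ij) muln0 sub0r -mulrA mulNr oppr_le0.
by rewrite !mulr_ge0.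
Qed.

Lemma cartan_form_aut (g : {perm V}) d e :
  (forall i j, (Q i j + Q j i <= 1)%N) -> quiver_aut Q g ->
  B (vact g d) (vact g e) = B d e.
Proof.
move=> simply_laced g_aut.
have entry_g i j : cartan_entry (g i) (g j) = cartan_entry i j.
  have := g_aut i j; rewrite /cartan_entry /bmat (inj_eq perm_inj).
  by have := simply_laced i j; have := simply_laced (g i) (g j); lia.
rewrite !cartan_formE (reindex_inj (@perm_inj _ g)); apply: eq_bigr => i _.
rewrite (reindex_inj (@perm_inj _ g)); apply: eq_bigr => j _.
by rewrite !ffunE !permK entry_g.
Qed.

Definition cartan_posdef : Prop := forall x, x != 0 -> 0 < B x x.

Hypothesis posdefQ : cartan_posdef.

Lemma cartan_form_ge2 x : x != 0 -> 2 <= B x x.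
Proof. by move=> /posdefQ; have [m ->] := cartan_form_even x; lia. Qed.

Lemma norm2_sign_coherent x : B x x = 2 -> (forall i, 0 <= x i) \/ (forall i, x i <= 0).
Proof.
move=> Bx2.
pose xp : dimvec V := [ffun i => if 0 <= x i then x i else 0].
pose xm : dimvec V := [ffun i => if 0 <= x i then 0 else - x i].
have x_eq : x = xp - xm by apply/ffunP => i; rewrite !ffunE; case: ifP; lia.
have xp_ge0 i : 0 <= xp i by rewrite ffunE; case: ifP; lia.
have xm_ge0 i : 0 <= xm i by rewrite ffunE; case: ifP; lia.
have cross : B xp xm <= 0.
  by apply: cartan_form_disjoint_le0 => // i; rewrite !ffunE; case: ifP; lia.
have [xp0 | /cartan_form_ge2 Bxp] := eqVneq xp 0.
  by right => i; rewrite x_eq xp0 sub0r ffunE oppr_le0.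
have [xm0 | /cartan_form_ge2 Bxm] := eqVneq xm 0.
  by left => i; rewrite x_eq xm0 subr0.
by move: Bx2; rewrite x_eq cartan_formBB; lia.
Qed.

End CartanForm.

Section OrbitSum.

Variables (V : finType) (G : {group {perm V}}).
Implicit Types (d e x : dimvec V).

Definition vact_sum d : dimvec V := \sum_(g in G) vact g d.

Lemma vactM (g h : {perm V}) d : vact (g * h) d = vact h (vact g d).
Proof. by apply/ffunP => i; rewrite !ffunE invMg permM. Qed.

Lemma vact_sum_vact g d : g \in G -> vact_sum (vact g d) = vact_sum d.
Proof.
move=> gG; rewrite /vact_sum [RHS](reindex_inj (mulgI g)) /=.
by apply: eq_big => [h | h _]; rewrite ?groupMl ?vactM.
Qed.

Lemma vact_vact_sum h d : h \in G -> vact h (vact_sum d) = vact_sum d.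
Proof.
move=> hG; rewrite /vact_sum [RHS](reindex_inj (mulIg h)) /=; apply/ffunP => i.
rewrite ffunE !sum_ffunE; apply: eq_big => [g | g _]; first by rewrite groupMr.
by rewrite vactM [RHS]ffunE.
Qed.

Lemma vact_sumB d e : vact_sum (d - e) = vact_sum d - vact_sum e.
Proof.
by rewrite /vact_sum -sumrB; apply: eq_bigr => g _; apply/ffunP => i; rewrite !ffunE.
Qed.

Lemma vact_sumE d i : vact_sum d i = #|('C_G[i | 'P])%g|%:Z * orbit_sum G d i.
Proof.
rewrite sum_ffunE (reindex_inj invg_inj) /=.
rewrite (eq_big (mem G) (fun g => d (g i))) => [|g|g _]; last 2 first.
- by rewrite groupV.
- by rewrite ffunE invgK.
rewrite (partition_big (fun g : {perm V} => g i) (mem (orbit 'P G i))) => [|g gG];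
  last exact: mem_orbit.
rewrite /orbit_sum mulr_sumr; apply: eq_bigr => j /orbitP[a aG <-{j}].
rewrite (eq_bigr (fun _ => d (a i))) => [|g /andP[_ /eqP ->] //].
rewrite sumr_const -mulr_natl natz -(card_rcoset _ a).
by rewrite -(amove_act 'P i (subsetT G) aG) /amove cardsE.
Qed.

Lemma vact_sum_neq0 x : x != 0 -> (forall i, 0 <= x i) \/ (forall i, x i <= 0) ->
  vact_sum x != 0.
Proof.
move=> /ffun_neq0[i xi_neq0] sign; apply/eqP => /ffunP/(_ i)/eqP.
rewrite sum_ffunE (bigD1 1%g) //= ffunE invg1 perm1 ffunE.
case: sign => sign.
- rewrite paddr_eq0 ?(negbTE xi_neq0) ?sign //.
  by apply: sumr_ge0 => g _; rewrite ffunE.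
- rewrite naddr_eq0 ?(negbTE xi_neq0) ?sign //.
  by apply: sumr_le0 => g _; rewrite ffunE.
Qed.

End OrbitSum.

Section RootsUpToSymmetry.

Variables (V : finType) (Q : quiver V) (G : {group {perm V}}).
Local Notation B := (cartan_form Q).

Hypothesis posdefQ : cartan_posdef Q.
Hypothesis G_isometric :
  forall g, g \in G -> forall d e, B (vact g d) (vact g e) = B d e.

Lemma norm2_vact_sum_neq0 x : B x x = 2 -> vact_sum G x != 0.
Proof.
move=> Bx2; apply: (vact_sum_neq0 G _ (norm2_sign_coherent posdefQ Bx2)).
by apply: contra_eqN Bx2 => /eqP ->; rewrite raddf0.
Qed.

Lemma cartan_form_vact_sum_gt0 x : B x x = 2 -> 0 < B x (vact_sum G x).
Proof.
move=> Bx2; have := posdefQ (norm2_vact_sum_neq0 Bx2).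
rewrite [X in B _ X]/vact_sum raddf_sum /=.
rewrite (eq_bigr (fun _ => B (vact_sum G x) x)) => [|g gG]; last first.
  by rewrite -{1}(vact_vact_sum x gG) G_isometric.
by rewrite sumr_const pmulrn_lgt0 ?cardG_gt0 // cartan_formC.
Qed.

Lemma exists_pairing_gt0 gamma beta :
  B gamma gamma = 2 -> vact_sum G gamma = vact_sum G beta ->
  exists2 g, g \in G & 0 < B gamma (vact g beta).
Proof.
move=> Bgamma S_eq; have := cartan_form_vact_sum_gt0 Bgamma.
rewrite S_eq /vact_sum raddf_sum /=.
have [/exists_inP[g gG pos] _ | /exists_inPn nonpos] :=
  boolP [exists g in G, 0 < B gamma (vact g beta)]; first by exists g.
by rewrite ltNge sumr_le0 // => g /nonpos; rewrite -leNgt.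
Qed.

Lemma norm2_eq_of_pairing gamma delta :
  B gamma gamma = 2 -> B delta delta = 2 -> 0 < B gamma delta ->
  vact_sum G gamma = vact_sum G delta -> gamma = delta.
Proof.
move=> Bgamma Bdelta pos S_eq; apply/eqP; rewrite -subr_eq0; apply: contraT => ne.
have Bdiff : B (gamma - delta) (gamma - delta) = 2.
  by have := cartan_form_ge2 posdefQ ne; rewrite cartan_formBB; lia.
by have := norm2_vact_sum_neq0 Bdiff; rewrite vact_sumB S_eq subrr eqxx.
Qed.

End RootsUpToSymmetry.

Section DynkinQuiver.

Variables (V : finType) (Q : quiver V).

Lemma dynkin_quiver_simply_laced : dynkin_quiver Q ->
  (forall i, Q i i = 0%N) /\ (forall i j, (Q i j + Q j i <= 1)%N).
Proof.
case=> n [e [f [_ _ Q_loopless Qe]]]; split=> // i j.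
by have [-> | /Qe ->] := eqVneq i j; rewrite ?Q_loopless ?leq_b1.
Qed.

Lemma cartan_posdef_transfer n (E : nat -> nat -> bool) (f : V -> 'I_n) :
  bijective f -> (forall i j, (Q i j + Q j i)%N = E (f i) (f j)) ->
  posdef_graph_form n E -> cartan_posdef Q.
Proof.
move=> [g fK gK] QE E_posdef x x_neq0.
pose Y k := if insub k is Some a then x (g a) else 0.
have YE (a : 'I_n) : Y a = x (g a) by rewrite /Y valK.
have g_bij : bijective g by exists f.
have -> : cartan_form Q x x = graph_form n E Y.
  rewrite cartan_formE /graph_form big_mkord (reindex g (onW_bij _ g_bij)).
  apply: eq_bigr => a _; rewrite big_mkord (reindex g (onW_bij _ g_bij)).
  apply: eq_bigr => b _.
  by rewrite /cartan_entry /cartan_coef QE !gK (inj_eq (can_inj gK)) !YE.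
apply: E_posdef => Y0; move: x_neq0; apply/negP/negPn/eqP/ffunP => i.
by rewrite ffunE -(fK i) -YE Y0.
Qed.

Lemma dynkin_cartan_posdef : dynkin_quiver Q -> cartan_posdef Q.
Proof.
case=> n [e [f [diag f_bij Q_loopless Qe]]].
have e_irr a : e a a = false.
  by case: diag => [[_ ->] | [[n_ge4 ->] | [n_E ->]]]; rewrite /adjA /adjD /adjE;
    [lia | lia | move: n_E; rewrite !inE; lia].
have QE i j : (Q i j + Q j i)%N = e (f i) (f j).
  by have [-> | /Qe //] := eqVneq i j; rewrite Q_loopless e_irr.
clear Qe e_irr; case: diag QE => [[_ ->] | [[n_ge4 ->] | [n_E ->]]] QE.
- exact: (@cartan_posdef_transfer n adj_path f f_bij QE (@posdef_path n)).
- exact: (@cartan_posdef_transfer n (adj_D n) f f_bij QE (@posdef_D n n_ge4)).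
move: n_E f f_bij QE; rewrite !inE => /or3P[] /eqP -> f f_bij QE.
- exact: (@cartan_posdef_transfer 6 (adj_E 6) f f_bij QE posdef_E6).
- exact: (@cartan_posdef_transfer 7 (adj_E 7) f f_bij QE posdef_E7).
- exact: (@cartan_posdef_transfer 8 (adj_E 8) f f_bij QE posdef_E8).
Qed.

End DynkinQuiver.

Theorem mainTheorem18 (V : finType) (Q : quiver V) (G : {group {perm V}})
  (hQ : dynkin_quiver Q)
  (hG : forall g, g \in G -> quiver_aut Q g)
  (gamma beta : dimvec V)
  (hgamma : is_root Q gamma) (hbeta : is_root Q beta)
  (hpi : forall i : V, orbit_sum G gamma i = orbit_sum G beta i) :
  exists2 g, g \in G & gamma = vact g beta.
Proof.
have [Q_loopless Q_simply_laced] := dynkin_quiver_simply_laced hQ.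
have posdefQ := dynkin_cartan_posdef hQ.
have G_isometric g : g \in G -> forall d e,
    cartan_form Q (vact g d) (vact g e) = cartan_form Q d e.
  by move=> gG d e; apply: cartan_form_aut Q_simply_laced (hG g gG).
have Bgamma := root_norm Q_loopless hgamma.
have Bbeta := root_norm Q_loopless hbeta.
have S_eq : vact_sum G gamma = vact_sum G beta.
  by apply/ffunP => i; rewrite !vact_sumE hpi.
have [g gG pos] := exists_pairing_gt0 posdefQ G_isometric Bgamma S_eq.
exists g => //; apply: (@norm2_eq_of_pairing _ _ G posdefQ) => //.
  by rewrite G_isometric.
by rewrite vact_sum_vact.
Qed.
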